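(* Let the monoid module $S$ over $M$ be $\omega$-bicontinuous. Then for all programs $C$ and initial states $\sigma$, \[ \mathsf{wlp}[C](\mathbf{0})(\sigma) \;=\; \bigwedge_{n\in\mathbb{N}} \ \bigoplus_{\pi \in \mathrm{Paths}^{n}(\langle C,\sigma\rangle)} \mathrm{wgt}(\pi)\otimes \top, \] where $\bigwedge$ denotes the infimum (meet) with respect to the natural order of $S$.
   Context: $M=(M,\odot,1)$ is a monoid of weights and $S=(S,\oplus,\mathbf{0},\otimes)$ an $M$-module: a commutative monoid with an associative, distributive left action $\otimes\colon M\times S\to S$ with $1\otimes a=a$, $v\otimes\mathbf{0}=\mathbf{0}$. Natural order: $a\preceq b$ iff $\exists c:\ a\oplus c=b$. $\omega$-bicontinuous means both the natural order and its reverse are pointed $\omega$-cpos (so there is a greatest element $\top$) and $\oplus,\otimes$ are $\omega$-continuous w.r.t.\ both. $C$ is a weighted guarded-command (wGCL) program (assignments, sequencing, conditionals, binary branching $\{C_1\}\oplus\{C_2\}$, weighting statements $\odot a$ for $a\in M$, while loops); $\mathsf{wlp}$ is the weakest liberal preweighting transformer (the backward weighting-transformer semantics where loops are given by greatest fixed points; for weightings $f\colon\Sigma\to S$, $\mathsf{wlp}[\odot a](f)=a\otimes f$, branching maps to $\oplus$, etc.), and $\mathbf{0}$ here is the constant-$\mathbf{0}$ postweighting. $\mathrm{Paths}^{n}(\langle C,\sigma\rangle)$ is the set of (not necessarily terminating) computation paths of length $n$ in the small-step operational semantics starting in the configuration $\langle C,\sigma\rangle$, and $\mathrm{wgt}(\pi)\in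 M$ is the weight of path $\pi$, the product of the weights collected along it. *)

From Stdlib Require Import List ClassicalEpsilon.
Import ListNotations.
Set Implicit Arguments.

Record monoid := mkMonoid {
  mcar :> Type;
  mmul : mcar -> mcar -> mcar;
  mone : mcar;
  mmulA : forall a b c, mmul a (mmul b c) = mmul (mmul a b) c;
  mmul1l : forall a, mmul mone a = a;
  mmul1r : forall a, mmul a mone = a }.

Record mmodule (M : monoid) := mkModule {
  scar :> Type;
  sadd : scar -> scar -> scar;
  szero : scar;
  sact : M -> scar -> scar;
  saddA : forall x y z, sadd x (sadd y z) = sadd (sadd x y) z;
  saddC : forall x y, sadd x y = sadd y x;
  sadd0 : forall x, sadd szero x = x;
  sactA : forall (a b : M) x, sact (mmul M a b) x = sact a (sact b x);
  sact1 : forall x, sact (mone M) x = x;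
  sactD : forall a x y, sact a (sadd x y) = sadd (sact a x) (sact a y);
  sact0 : forall a, sact a szero = szero }.

Arguments sadd {M} _ _ _.
Arguments szero {M} _.
Arguments sact {M} _ _ _.

Section Order.
Variables (M : monoid) (S : mmodule M).

Definition nle (a b : S) : Prop := exists c, sadd S a c = b.

Definition is_sup (P : S -> Prop) (s : S) : Prop :=
  (forall x, P x -> nle x s) /\ (forall y, (forall x, P x -> nle x y) -> nle s y).
Definition is_inf (P : S -> Prop) (s : S) : Prop :=
  (forall x, P x -> nle s x) /\ (forall y, (forall x, P x -> nle y x) -> nle y s).

Definition range (u : nat -> S) : S -> Prop := fun x => exists n, u n = x.

Definition increasing (u : nat -> S) := forall n, nle (u n) (u (Datatypes.S n)).
Definition decreasing (u : nat -> S) := forall n, nle (u (Datatypes.S n)) (u n).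

(* ω-bicontinuity: the natural order is a partial order, it and its reverse
   are pointed ω-cpos (ω-chains have sups / infs, bottom is 0, a top exists),
   and ⊕, ⊗ are ω-continuous w.r.t. both orders. *)
Definition omega_bicontinuous : Prop :=
  (forall a b : S, nle a b -> nle b a -> a = b) /\
  (forall u, increasing u -> exists s, is_sup (range u) s) /\
  (forall u, decreasing u -> exists s, is_inf (range u) s) /\
  (forall a : S, nle (szero S) a) /\
  (exists t : S, forall a, nle a t) /\
  (forall u s (a : S), increasing u -> is_sup (range u) s ->
      is_sup (range (fun n => sadd S a (u n))) (sadd S a s)) /\
  (forall u s (a : S), decreasing u -> is_inf (range u) s ->
      is_inf (range (fun n => sadd S a (u n))) (sadd S a s)) /\
  (forall u s (v : M), increasing u -> is_sup (range u) s ->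
      is_sup (range (fun n => sact S v (u n))) (sact S v s)) /\
  (forall u s (v : M), decreasing u -> is_inf (range u) s ->
      is_inf (range (fun n => sact S v (u n))) (sact S v s)).

(* the greatest element ⊤ (exists under ω-bicontinuity) *)
Definition stop : S :=
  epsilon (inhabits (szero S)) (fun t => forall a : S, nle a t).

End Order.

Arguments nle {M S} _ _.
Arguments is_sup {M S} _ _.
Arguments is_inf {M S} _ _.
Arguments range {M S} _ _.
Arguments increasing {M S} _.
Arguments decreasing {M S} _.
Arguments omega_bicontinuous {M} _.
Arguments stop {M} _.

Section Programs.
Variables (M : monoid) (Sigma : Type).

Inductive prog : Type :=
| Assign : (Sigma -> Sigma) -> prog          (* x := E, as a state update *)
| Seq : prog -> prog -> prog
| Ite : (Sigma -> bool) -> prog -> prog -> prog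
| Branch : prog -> prog -> prog
| Weight : M -> prog
| While : (Sigma -> bool) -> prog -> prog.

Inductive conf : Type :=
| Run : prog -> Sigma -> conf
| Term : Sigma -> conf.

(* small-step operational semantics: list of weighted successor configurations
   (each list entry is a distinct transition; terminated configurations have
   no successors) *)
Fixpoint stepP (C : prog) (s : Sigma) : list (M * conf) :=
  match C with
  | Assign u => [(mone M, Term (u s))]
  | Weight a => [(a, Term s)]
  | Seq C1 C2 =>
      map (fun wc => match wc with
                     | (w, Run C1' t) => (w, Run (Seq C1' C2) t)
                     | (w, Term t) => (w, Run C2 t)
                     end) (stepP C1 s)
  | Ite b C1 C2 => [(mone M, Run (if b s then C1 else C2) s)]
  | Branch C1 C2 => [(mone M, Run C1 s); (mone M, Run C2 s)]
  | While b C' => if b s then [(mone M, Run (Seq C' (While b C')) s)]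
                  else [(mone M, Term s)]
  end.

Definition step (c : conf) : list (M * conf) :=
  match c with Run C s => stepP C s | Term _ => [] end.

(* a path of length n from c is the list of its n transitions
   (weight, target configuration) *)
Fixpoint paths (n : nat) (c : conf) : list (list (M * conf)) :=
  match n with
  | O => [[]]
  | Datatypes.S n' => flat_map (fun wc => map (cons wc) (paths n' (snd wc))) (step c)
  end.

Definition wgt (pi : list (M * conf)) : M :=
  fold_right (fun wc acc => mmul M (fst wc) acc) (mone M) pi.

End Programs.

Arguments Assign {M Sigma} _.
Arguments Weight {M Sigma} _.

Section Wlp.
Variables (M : monoid) (S : mmodule M) (Sigma : Type).

Definition pw_le (f g : Sigma -> S) : Prop := forall s, nle (f s) (g s).

Definition gfp (Phi : (Sigma -> S) -> (Sigma -> S)) : Sigma -> S :=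
  epsilon (inhabits (fun _ : Sigma => szero S))
    (fun g => (forall s, Phi g s = g s) /\
              forall h, (forall s, Phi h s = h s) -> pw_le h g).

Fixpoint wlp (C : prog M Sigma) (f : Sigma -> S) : Sigma -> S :=
  match C with
  | Assign u => fun s => f (u s)
  | Weight a => fun s => sact S a (f s)
  | Seq C1 C2 => wlp C1 (wlp C2 f)
  | Ite b C1 C2 => fun s => if b s then wlp C1 f s else wlp C2 f s
  | Branch C1 C2 => fun s => sadd S (wlp C1 f s) (wlp C2 f s)
  | While b C' => gfp (fun X s => if b s then wlp C' X s else f s)
  end.

Definition path_sum (n : nat) (C : prog M Sigma) (s : Sigma) : S :=
  fold_right (sadd S) (szero S)
    (map (fun pi => sact S (wgt pi) (stop S)) (paths n (Run C s))).

End Wlp.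

(* Both sides are the greatest fixed point of the one-step Bellman operator on
   configurations, which sends [V] to [fun <C, s> => (+)_(C,s) --w--> c  w (x) V c]
   and to the postweighting on terminated configurations.  Its n-fold iterate on
   the constant [T] is the sum of [wgt pi (x) T] over the length-n paths (for the
   postweighting 0), and these iterates decrease; since (+) and (x) preserve
   infima of decreasing chains, their infimum is a fixed point.  It coincides
   with [wlp] by structural induction on programs: for [C1; C2] and for loops one
   compares [<C; C2, s>] with [<C, s>] by induction on the approximation depth,
   which for a loop also shows that every fixed point of its characteristic
   function lies below it. *)
From Stdlib Require Import List ClassicalEpsilon FunctionalExtensionality Lia.
Import ListNotations.
Set Implicit Arguments.

Section NaturalOrder.
Variables (M : monoid) (S : mmodule M).

Definition ssum (l : list S) : S := fold_right (sadd S) (szero S) l.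

Lemma sadd0r (a : S) : sadd S a (szero S) = a.
Proof. rewrite saddC; apply sadd0. Qed.

Lemma nle_refl (a : S) : nle a a.
Proof. exists (szero S); apply sadd0r. Qed.

Lemma nle_trans (a b c : S) : nle a b -> nle b c -> nle a c.
Proof. intros [x <-] [y <-]; exists (sadd S x y); apply saddA. Qed.

Lemma nle_add (a a' b b' : S) :
  nle a a' -> nle b b' -> nle (sadd S a b) (sadd S a' b').
Proof.
  intros [x <-] [y <-]; exists (sadd S x y).
  rewrite !saddA; f_equal; rewrite <- !saddA; f_equal; apply saddC.
Qed.

Lemma nle_act (v : M) (a b : S) : nle a b -> nle (sact S v a) (sact S v b).
Proof. intros [x <-]; exists (sact S v x); symmetry; apply sactD. Qed.

Lemma ssum_app (l1 l2 : list S) : ssum (l1 ++ l2) = sadd S (ssum l1) (ssum l2).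
Proof.
  induction l1 as [|a l1 IH]; simpl; [now rewrite sadd0|].
  now rewrite IH, saddA.
Qed.

Lemma ssum_act (v : M) (l : list S) : ssum (map (sact S v) l) = sact S v (ssum l).
Proof.
  induction l as [|a l IH]; simpl; [now rewrite sact0|].
  now rewrite IH, sactD.
Qed.

Lemma decreasing_le (u : nat -> S) m n :
  decreasing u -> m <= n -> nle (u n) (u m).
Proof.
  intros Hu Hmn; induction Hmn; [apply nle_refl|].
  eapply nle_trans; [apply Hu | exact IHHmn].
Qed.

Lemma is_inf_const (a : S) : is_inf (range (fun _ : nat => a)) a.
Proof.
  split; [intros y [n <-]; apply nle_refl|].
  intros y Hy; apply Hy; now exists 0.
Qed.

Lemma is_inf_tail (u : nat -> S) x :
  decreasing u -> is_inf (range u) x -> is_inf (range (fun n => u (Datatypes.S n))) x.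
Proof.
  intros Hu [Hlow Hgreat]; split.
  - intros y [n <-]; apply Hlow; now exists (Datatypes.S n).
  - intros y Hy; apply Hgreat; intros z [n <-].
    eapply nle_trans; [apply Hy; now exists n | apply Hu].
Qed.

End NaturalOrder.

Arguments ssum {M} S l.

Section Bicontinuous.
Variables (M : monoid) (S : mmodule M) (Sigma : Type).
Hypothesis HS : omega_bicontinuous S.

Local Notation conf := (conf M Sigma).
Local Notation top := (stop S).
Local Notation zero := (szero S).

Lemma nle_antisym (a b : S) : nle a b -> nle b a -> a = b.
Proof. destruct HS as (H & _); apply H. Qed.

Lemma is_inf_unique (P : S -> Prop) x y : is_inf P x -> is_inf P y -> x = y.
Proof. intros [Hx Hxg] [Hy Hyg]; apply nle_antisym; [apply Hyg | apply Hxg]; assumption. Qed.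

Lemma decreasing_inf (u : nat -> S) : decreasing u -> exists x, is_inf (range u) x.
Proof. destruct HS as (_ & _ & H & _); apply H. Qed.

Lemma nle_top (a : S) : nle a top.
Proof.
  destruct HS as (_ & _ & _ & _ & Htop & _).
  exact (epsilon_spec (inhabits zero) (fun t => forall a : S, nle a t) Htop a).
Qed.

Lemma is_inf_act (u : nat -> S) x (v : M) :
  decreasing u -> is_inf (range u) x ->
  is_inf (range (fun n => sact S v (u n))) (sact S v x).
Proof. destruct HS as (_ & _ & _ & _ & _ & _ & _ & _ & H); apply H. Qed.

Lemma is_inf_add (u v : nat -> S) a b :
  decreasing u -> decreasing v -> is_inf (range u) a -> is_inf (range v) b ->
  is_inf (range (fun n => sadd S (u n) (v n))) (sadd S a b).
Proof.
  destruct HS as (_ & _ & _ & _ & _ & _ & Haddl & _).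
  intros Hu Hv Ha Hb; split.
  - intros y [n <-]; apply nle_add; [apply Ha | apply Hb]; now exists n.
  - intros y Hy.
    (* first pass to the limit in [v] with [u m] fixed, then in [u] *)
    assert (Hm : forall m, nle y (sadd S (u m) b)).
    { intro m; apply (Haddl v b (u m) Hv Hb); intros z [n <-].
      eapply nle_trans; [apply Hy; now exists (Nat.max m n)|].
      apply nle_add; apply decreasing_le; auto; lia. }
    rewrite saddC; apply (Haddl u a b Hu Ha); intros z [n <-].
    rewrite saddC; apply Hm.
Qed.

Definition wsum (V : conf -> S) (l : list (M * conf)) : S :=
  ssum S (map (fun wc => sact S (fst wc) (V (snd wc))) l).

Definition bellman (g : Sigma -> S) (V : conf -> S) (c : conf) : S :=
  match c with
  | Run C s => wsum V (stepP C s)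
  | Term _ s => g s
  end.

Fixpoint approx (g : Sigma -> S) (n : nat) : conf -> S :=
  match n with
  | O => fun _ => top
  | Datatypes.S n => bellman g (approx g n)
  end.

Definition op_wlp (g : Sigma -> S) (c : conf) : S :=
  epsilon (inhabits zero) (is_inf (range (fun n => approx g n c))).

Lemma wsum_mono (V V' : conf -> S) l :
  (forall c, nle (V c) (V' c)) -> nle (wsum V l) (wsum V' l).
Proof.
  intros HV; induction l as [|[w c] l IH]; [apply nle_refl|].
  apply nle_add; [apply nle_act, HV | exact IH].
Qed.

Lemma wsum_unit (V : conf -> S) c : wsum V [(mone M, c)] = V c.
Proof. unfold wsum; simpl; now rewrite sact1, sadd0r. Qed.

Lemma is_inf_wsum (V : nat -> conf -> S) (L : conf -> S) l :
  (forall c, decreasing (fun n => V n c)) ->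
  (forall c, is_inf (range (fun n => V n c)) (L c)) ->
  is_inf (range (fun n => wsum (V n) l)) (wsum L l).
Proof.
  intros Hdec Hinf; induction l as [|[w c] l IH].
  - exact (is_inf_const S zero).
  - apply (is_inf_add (u := fun n => sact S w (V n c))); auto.
    + intro n; apply nle_act, Hdec.
    + intro n; apply wsum_mono; intro; apply Hdec.
    + now apply is_inf_act.
Qed.

Lemma bellman_mono g (V V' : conf -> S) :
  (forall c, nle (V c) (V' c)) -> forall c, nle (bellman g V c) (bellman g V' c).
Proof. intros HV [C s | s]; [now apply wsum_mono | apply nle_refl]. Qed.

Lemma approx_decreasing g c : decreasing (fun n => approx g n c).
Proof.
  intro n; revert c; induction n as [|n IH]; intro c; [apply nle_top|].
  now apply bellman_mono.
Qed.

Lemma le_approx_Term g n s : nle (g s) (approx g n (Term M s)).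
Proof. destruct n; [apply nle_top | apply nle_refl]. Qed.

Lemma op_wlp_inf g c : is_inf (range (fun n => approx g n c)) (op_wlp g c).
Proof.
  unfold op_wlp; apply epsilon_spec, decreasing_inf, approx_decreasing.
Qed.

Lemma op_wlp_le_approx g n c : nle (op_wlp g c) (approx g n c).
Proof. apply (op_wlp_inf g c); now exists n. Qed.

Lemma le_op_wlp g c x : (forall n, nle x (approx g n c)) -> nle x (op_wlp g c).
Proof. intros Hx; apply (op_wlp_inf g c); intros y [n <-]; apply Hx. Qed.

Lemma op_wlp_fix g c : op_wlp g c = bellman g (op_wlp g) c.
Proof.
  apply (is_inf_unique (is_inf_tail (approx_decreasing g c) (op_wlp_inf g c))).
  destruct c as [C s | s]; simpl.
  - apply is_inf_wsum; [apply approx_decreasing | apply op_wlp_inf].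
  - exact (is_inf_const S (g s)).
Qed.

Lemma op_wlp_Run g C s : op_wlp g (Run C s) = wsum (op_wlp g) (stepP C s).
Proof. apply op_wlp_fix. Qed.

Lemma op_wlp_Term g s : op_wlp g (Term M s) = g s.
Proof. apply op_wlp_fix. Qed.

Definition seq_conf (C2 : prog M Sigma) (c : conf) : conf :=
  match c with
  | Run C1 s => Run (Seq C1 C2) s
  | Term _ s => Run C2 s
  end.

Lemma wsum_Seq (V : conf -> S) C1 C2 s :
  wsum V (stepP (Seq C1 C2) s) = wsum (fun c => V (seq_conf C2 c)) (stepP C1 s).
Proof.
  unfold wsum; simpl; rewrite !map_map; f_equal.
  apply map_ext; now intros [w [C t | t]].
Qed.

Lemma op_wlp_seq_le g C2 c :
  nle (op_wlp g (seq_conf C2 c)) (op_wlp (fun s => op_wlp g (Run C2 s)) c).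
Proof.
  apply le_op_wlp; intro n; revert c; induction n as [|n IH]; intro c;
    [apply nle_top|].
  destruct c as [C1 s | s]; cbn [seq_conf approx bellman].
  - rewrite op_wlp_Run, wsum_Seq; now apply wsum_mono.
  - apply nle_refl.
Qed.

(* The hypothesis is the inductive step at the continuation [C2]; for a loop it
   needs the bound at depth n for the loop body, hence its shape. *)
Lemma op_wlp_seq_ge g h C2 :
  (forall n, (forall c, nle (op_wlp h c) (approx g n (seq_conf C2 c))) ->
     forall s, nle (h s) (approx g (Datatypes.S n) (Run C2 s))) ->
  forall c, nle (op_wlp h c) (op_wlp g (seq_conf C2 c)).
Proof.
  intros Hh c; apply le_op_wlp; intro n; revert c.
  induction n as [|n IH]; intro c; [apply nle_top|].
  destruct c as [C1 s | s].
  - rewrite op_wlp_Run; cbn [seq_conf approx bellman].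
    rewrite wsum_Seq; now apply wsum_mono.
  - rewrite op_wlp_Term; now apply Hh.
Qed.

Lemma op_wlp_Seq g C1 C2 s :
  op_wlp g (Run (Seq C1 C2) s) = op_wlp (fun t => op_wlp g (Run C2 t)) (Run C1 s).
Proof.
  apply nle_antisym; [exact (op_wlp_seq_le g C2 (Run C1 s))|].
  refine (op_wlp_seq_ge g _ C2 _ (Run C1 s)).
  intros n _ t; apply op_wlp_le_approx.
Qed.

Lemma gfp_eq (Phi : (Sigma -> S) -> Sigma -> S) (Y : Sigma -> S) :
  (forall s, Phi Y s = Y s) ->
  (forall h, (forall s, Phi h s = h s) -> pw_le S h Y) ->
  gfp S Phi = Y.
Proof.
  intros Yfix Ygreat; unfold gfp.
  destruct (epsilon_spec (inhabits (fun _ : Sigma => zero))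
              (fun G => (forall s, Phi G s = G s) /\
                        forall h, (forall s, Phi h s = h s) -> pw_le S h G))
    as [Gfix Ggreat]; [now exists Y|].
  apply functional_extensionality; intro s.
  apply nle_antisym; [now apply Ygreat | now apply Ggreat].
Qed.

Lemma wlp_op_wlp (C : prog M Sigma) :
  forall g s, wlp S C g s = op_wlp g (Run C s).
Proof.
  induction C as [u | C1 IH1 C2 IH2 | b C1 IH1 C2 IH2 | C1 IH1 C2 IH2 | a | b C IH];
    intros g s; simpl.
  - rewrite op_wlp_Run; cbn [stepP]; now rewrite wsum_unit, op_wlp_Term.
  - rewrite op_wlp_Seq, IH1; f_equal.
    apply functional_extensionality; intro t; apply IH2.
  - rewrite op_wlp_Run; cbn [stepP]; now rewrite wsum_unit; destruct (b s).
  - rewrite op_wlp_Run; unfold wsum; simpl.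
    now rewrite !sact1, sadd0r, IH1, IH2.
  - rewrite op_wlp_Run; unfold wsum; simpl.
    now rewrite op_wlp_Term, sadd0r.
  - set (W := While b C).
    rewrite (@gfp_eq _ (fun t => op_wlp g (Run W t))); [reflexivity | |].
    + intro t; rewrite (op_wlp_Run g W t); unfold W; simpl.
      destruct (b t); rewrite wsum_unit; [|now rewrite op_wlp_Term].
      now rewrite IH, op_wlp_Seq.
    + intros h Hh t.
      rewrite <- (op_wlp_Term h t).
      refine (op_wlp_seq_ge g h W _ (Term M t)).
      intros n Hn u; rewrite <- Hh; unfold W; simpl.
      destruct (b u); rewrite wsum_unit; [|apply le_approx_Term].
      rewrite IH; apply (Hn (Run C u)).
Qed.

Lemma path_sum_approx n (c : conf) :
  ssum S (map (fun pi => sact S (wgt pi) top) (paths n c)) = approx (fun _ => zero) n c.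
Proof.
  revert c; induction n as [|n IH]; intro c.
  - simpl; unfold wgt; simpl; now rewrite sact1, sadd0r.
  - destruct c as [C s | s]; simpl; [|reflexivity].
    unfold wsum; induction (stepP C s) as [|[w c] l IHl]; simpl; [reflexivity|].
    rewrite map_app, ssum_app, IHl, map_map, <- IH, <- ssum_act, map_map.
    f_equal; f_equal; apply map_ext; intro pi.
    unfold wgt; simpl; apply sactA.
Qed.

End Bicontinuous.

Theorem mainTheorem6 (M : monoid) (S : mmodule M) (Sigma : Type) :
  omega_bicontinuous S ->
  forall (C : prog M Sigma) (s : Sigma),
    is_inf (range (fun n => path_sum S n C s))
           (wlp S C (fun _ => szero S) s).
Proof.
  intros HS C s.
  rewrite (wlp_op_wlp HS).
  replace (fun n => path_sum S n C s)
    with (fun n => approx S (fun _ => szero S) n (Run C s)).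
  - apply op_wlp_inf, HS.
  - apply functional_extensionality; intro n.
    symmetry; apply path_sum_approx.
Qed.
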